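(* Let $X_j=[C_j-\frac{R_j}{2},\,C_j+\frac{R_j}{2}]$, $j=1,2$, be interval-valued random variables with centers $C_j$ and ranges $R_j$ such that the symbolic correlation $\mathrm{Cor}_k(X_1,X_2)=\frac{\mathrm{Cov}_k(X_1,X_2)}{\sqrt{\mathrm{Var}_k(X_1)\mathrm{Var}_k(X_2)}}$ exists, and let $\omega_1,\omega_2\in\mathbb R$ with $\omega_1\ne0$. Then: (1) For $k=1,2,3$, $\mathrm{Cor}_k(X_1,X_1)=1$. For $k=4,5$, $\mathrm{Cor}_k(X_1,X_1)=1$ if and only if $P(R_1=0)=1$. (2) $\mathrm{Cor}_k(X_1,\omega_1X_2+\omega_2)=\mathrm{sgn}(\omega_1)\,\mathrm{Cor}_k(X_1,X_2)$ for $k=1,4,5$, and $\mathrm{Cor}_k(X_1,\omega_1X_2+\omega_2)=\mathrm{Cor}_k(X_1,X_2)$ for $k=2,3$ when $\omega_1>0$, where $\mathrm{sgn}(x)=1$ for $x>0$, $-1$ for $x<0$, $0$ for $x=0$. Moreover, when $\omega_1<0$, $\mathrm{Cor}_k(X_1,\omega_1X_2+\omega_2)\ne-\mathrm{Cor}_k(X_1,X_2)$ for $k=2,3$.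
   Context: An interval-valued random variable is $X=[A,B]$ with $A,B$ real random variables and $P(A\le B)=1$; center $C=(A+B)/2$, range $R=B-A$. Interval arithmetic: $\omega_1X_2+\omega_2$ is the interval-valued random variable with center $\omega_1C_2+\omega_2$ and range $|\omega_1|R_2$. Let $\delta_1=0$, $\delta_2=\delta_4=1/4$, $\delta_3=\delta_5=1/12$. Symbolic variances: $\mathrm{Var}_k(X)=\mathrm{Var}(C)+\delta_k\mathrm{E}(R^2)$, $k=1,\dots,5$. Symbolic covariances of interval-valued random variables $Y,Z$ with centers $C_Y,C_Z$ and ranges $R_Y,R_Z$: $\mathrm{Cov}_k(Y,Z)=\mathrm{Cov}(C_Y,C_Z)+\delta_k\mathrm{E}(R_YR_Z)$ for $k=1,2,3$ and $\mathrm{Cov}_k(Y,Z)=\mathrm{Cov}(C_Y,C_Z)$ for $k=4,5$ (also when $Y=Z$). Symbolic correlation: $\mathrm{Cor}_k(Y,Z)=\mathrm{Cov}_k(Y,Z)/\sqrt{\mathrm{Var}_k(Y)\mathrm{Var}_k(Z)}$; existence means the relevant moments are finite and the variances in the denominator are positive.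
   Formalization: For k=2,3 and ω₁<0, the inequality Cor_k(X₁,ω₁X₂+ω₂) ≠ −Cor_k(X₁,X₂) is claimed only under the extra hypothesis E(R₁R₂) ≠ 0. The statement above fails without it. *)

From HB Require Import structures.
From mathcomp Require Import all_boot all_order all_algebra.
From mathcomp Require Import all_classical all_reals all_analysis.
Set Implicit Arguments. Unset Strict Implicit. Unset Printing Implicit Defensive.
Import Order.TTheory GRing.Theory Num.Theory.
Local Open Scope classical_set_scope.
Local Open Scope ring_scope.

Section IntervalRV.
Context {d : measure_display} {T : measurableType d} {R : realType}
  (P : probability T R).

(* An interval-valued random variable X = [A, B] is represented by the pair
   (A, B) of real functions on the sample space. *)
Definition is_ivrv (X : (T -> R) * (T -> R)) : Prop :=
  [/\ measurable_fun setT X.1, measurable_fun setT X.2 &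
      P [set w | X.1 w <= X.2 w] = 1%E].

Definition ivC (X : (T -> R) * (T -> R)) : T -> R := fun w => (X.1 w + X.2 w) / 2.
Definition ivR (X : (T -> R) * (T -> R)) : T -> R := fun w => X.2 w - X.1 w.

Definition ivaff (w1 w2 : R) (X : (T -> R) * (T -> R)) : (T -> R) * (T -> R) :=
  (fun w => w1 * ivC X w + w2 - `|w1| * ivR X w / 2,
   fun w => w1 * ivC X w + w2 + `|w1| * ivR X w / 2).

Definition delta (k : nat) : R :=
  match k with
  | 2 | 4 => 1 / 4
  | 3 | 5 => 1 / 12
  | _ => 0
  end.

Definition sVar (k : nat) (X : (T -> R) * (T -> R)) : R :=
  fine (covariance P (ivC X) (ivC X)) +
  delta k * fine ('E_P[(fun w => (ivR X w ^+ 2)%R)]).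

Definition sCov (k : nat) (Y Z : (T -> R) * (T -> R)) : R :=
  fine (covariance P (ivC Y) (ivC Z)) +
  (if (k <= 3)%N then delta k * fine ('E_P[(fun w => (ivR Y w * ivR Z w)%R)])
   else 0).

Definition sCor (k : nat) (Y Z : (T -> R) * (T -> R)) : R :=
  sCov k Y Z / Num.sqrt (sVar k Y * sVar k Z).

(* existence of Cor_k(Y, Z): the relevant moments are finite (centers and
   ranges square-integrable) and the variances in the denominator are positive *)
Definition sCor_exists (k : nat) (Y Z : (T -> R) * (T -> R)) : Prop :=
  [/\ ivC Y \in Lfun P 2, ivC Z \in Lfun P 2,
      ivR Y \in Lfun P 2 & ivR Z \in Lfun P 2] /\
  (0 < sVar k Y /\ 0 < sVar k Z).

End IntervalRV.

(* Under [w1 X + w2] the centers transform affinely and the ranges are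
   multiplied by [|w1|]. Hence the center part of the symbolic covariance
   scales by [w1], the range part by [|w1|], and every symbolic variance by
   [w1^2], so the denominator of [Cor_k] scales by [|w1|]: the center part of
   the correlation picks up [sgn w1] while the range part is unchanged. For
   [w1 < 0] the two parts therefore cannot both flip sign unless the range
   part vanishes. For [k = 4, 5] the self-covariance lacks the term
   [delta_k E(R^2)] of the variance, so [Cor_k(X, X) = 1] exactly when
   [E(R^2) = 0], i.e. when [R = 0] almost surely. *)

From HB Require Import structures.
From mathcomp Require Import all_boot all_order all_algebra.
From mathcomp Require Import all_classical all_reals all_analysis.
From mathcomp Require Import ring lra measurable_realfun.
Import Order.TTheory GRing.Theory Num.Theory.
Local Open Scope classical_set_scope.
Local Open Scope ring_scope.

Section moments.
Context {d : measure_display} {T : measurableType d} {R : realType}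
  (P : probability T R).

Lemma Lfun2_Lfun1 {f : T -> R} : f \in Lfun P 2%:E -> f \in Lfun P 1.
Proof. exact/Lfun_subset12/fin_num_measure. Qed.

Lemma fine_expectationZl (f : T -> R) (a : R) : f \in Lfun P 1 ->
  fine 'E_P[a \o* f] = a * fine 'E_P[f].
Proof. by move=> f1; rewrite expectationZl // fineM // expectation_fin_num. Qed.

Lemma fine_covarianceZDr (f g : T -> R) (a b : R) :
  f \in Lfun P 2%:E -> g \in Lfun P 2%:E ->
  fine (covariance P f (a \o* g \+ cst b)) = a * fine (covariance P f g).
Proof.
move=> f2 g2; have f1 := Lfun2_Lfun1 f2; have g1 := Lfun2_Lfun1 g2.
have fg1 := Lfun2_mul_Lfun1 f2 g2.
rewrite covarianceDr ?Lfun_cst ?Lfun_scale ?ler1n //.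
rewrite covariance_cst_r adde0 covarianceZr //.
by rewrite fineM // covariance_fin_num.
Qed.

Lemma fine_varianceZD (f : T -> R) (a b : R) : f \in Lfun P 2%:E ->
  fine 'V_P[a \o* f \+ cst b] = a ^+ 2 * fine 'V_P[f].
Proof.
move=> f2; rewrite varianceD_cst_r ?Lfun_scale ?ler1n // varianceZ //.
by rewrite fineM // variance_fin_num.
Qed.

Lemma expectation_sqr_eq0 (f : T -> R) : measurable_fun setT f ->
  ('E_P[fun w => (f w ^+ 2)%R] = 0)%E <-> P [set w | f w = 0] = 1%E.
Proof.
move=> mf.
have mf0 : measurable [set w | f w = 0].
  by rewrite -[X in measurable X]setTI; exact: mf (measurable_set1 _).
rewrite unlock.
have -> : (\int[P]_w (f w ^+ 2)%:E = \int[P]_w `|(f w ^+ 2)%:E|)%E.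
  by apply: eq_integral => w _; rewrite gee0_abs // lee_fin sqr_ge0.
rewrite ae_eq_integral_abs //; last exact/measurable_EFinP/measurable_funX.
have f0C : P (~` [set w | f w = 0%R]) = (1 - P [set w | f w = 0%R])%E.
  exact: probability_setC.
split.
- move=> [N [mN N0 fN]].
  have : P (~` [set w | f w = 0]) = 0%E.
    apply/eqP; rewrite -measure_le0 -N0 le_measure ?inE //; first exact: measurableC.
    move=> w /= fw; apply: fN => /(_ I) /= [] /eqP.
    by rewrite sqrf_eq0 => /eqP.
  rewrite f0C -(fineK (fin_num_measure P _ mf0)) -EFinB => -[h].
  by congr EFin; lra.
- move=> f0_as; exists (~` [set w | f w = 0]); split.
  + exact: measurableC.
  + by move: f0C; rewrite f0_as subee.
  + by move=> w /= nf0 fw; apply: nf0 => _; rewrite fw expr0n.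
Qed.

End moments.

Section symbolic_moments.
Context {d : measure_display} {T : measurableType d} {R : realType}
  (P : probability T R).
Implicit Types (X Y Z : (T -> R) * (T -> R)) (k : nat).

Definition sCovC Y Z : R := fine (covariance P (ivC Y) (ivC Z)).

Definition sCovR k Y Z : R :=
  if (k <= 3)%N then delta k * fine 'E_P[fun w => ivR Y w * ivR Z w] else 0.

Lemma sCovE k Y Z : sCov P k Y Z = sCovC Y Z + sCovR k Y Z.
Proof. by []. Qed.

Lemma sCorE k Y Z : sCor P k Y Z =
  sCovC Y Z / Num.sqrt (sVar P k Y * sVar P k Z) +
  sCovR k Y Z / Num.sqrt (sVar P k Y * sVar P k Z).
Proof. by rewrite /sCor sCovE mulrDl. Qed.

Lemma delta_neq0 k : (2 <= k <= 5)%N -> delta k != 0 :> R.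
Proof. by case: k => [|[|[|[|[|[|]]]]]] //= _; apply/lt0r_neq0; lra. Qed.

Lemma sCovR_eq0 k Y Z : [|| k == 1%N, k == 4%N | k == 5%N] -> sCovR k Y Z = 0.
Proof. by case/or3P => /eqP ->; rewrite /sCovR /= ?mul0r. Qed.

Lemma ivC_ivaff w1 w2 X : ivC (ivaff w1 w2 X) = w1 \o* ivC X \+ cst w2.
Proof. by apply/funext => w; rewrite [LHS]/ivC /=; lra. Qed.

Lemma ivR_ivaff w1 w2 X : ivR (ivaff w1 w2 X) = `|w1| \o* ivR X.
Proof. by apply/funext => w; rewrite [LHS]/ivR /=; lra. Qed.

Section ivaff.
Variables (w1 w2 : R) (Y Z : (T -> R) * (T -> R)).
Hypotheses (CY2 : ivC Y \in Lfun P 2%:E) (CZ2 : ivC Z \in Lfun P 2%:E)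
  (RY2 : ivR Y \in Lfun P 2%:E) (RZ2 : ivR Z \in Lfun P 2%:E).

Lemma sVar_ivaff k : sVar P k (ivaff w1 w2 Z) = w1 ^+ 2 * sVar P k Z.
Proof.
rewrite /sVar ivC_ivaff ivR_ivaff.
have -> : (fun w => (`|w1| \o* ivR Z) w ^+ 2) = w1 ^+ 2 \o* (ivR Z \* ivR Z).
  by apply/funext => w /=; rewrite exprMn real_normK ?num_real // expr2 mulrC.
rewrite -/(variance P (w1 \o* ivC Z \+ cst w2)) -/(variance P (ivC Z)).
rewrite fine_varianceZD // fine_expectationZl ?Lfun2_mul_Lfun1 //.
rewrite [_ \* _](_ : _ = fun w => ivR Z w ^+ 2); first ring.
by apply/funext => w /=; rewrite expr2.
Qed.

Lemma sCovC_ivaff : sCovC Y (ivaff w1 w2 Z) = w1 * sCovC Y Z.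
Proof. by rewrite /sCovC ivC_ivaff fine_covarianceZDr. Qed.

Lemma sCovR_ivaff k : sCovR k Y (ivaff w1 w2 Z) = `|w1| * sCovR k Y Z.
Proof.
rewrite /sCovR ivR_ivaff; case: ifP => _; last by rewrite mulr0.
have -> : (fun w => ivR Y w * (`|w1| \o* ivR Z) w) = `|w1| \o* (ivR Y \* ivR Z).
  by apply/funext => w /=; rewrite mulrA.
by rewrite fine_expectationZl ?Lfun2_mul_Lfun1 // mulrCA.
Qed.

Lemma sCor_ivaff k : w1 != 0 -> sCor P k Y (ivaff w1 w2 Z) =
  Num.sg w1 * (sCovC Y Z / Num.sqrt (sVar P k Y * sVar P k Z)) +
  sCovR k Y Z / Num.sqrt (sVar P k Y * sVar P k Z).
Proof.
move=> w1_neq0.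
have sqrt_ivaff : Num.sqrt (sVar P k Y * sVar P k (ivaff w1 w2 Z)) =
    `|w1| * Num.sqrt (sVar P k Y * sVar P k Z).
  by rewrite sVar_ivaff mulrCA sqrtrM ?sqrtr_sqr // sqr_ge0.
rewrite /sCor sCovE sCovC_ivaff sCovR_ivaff sqrt_ivaff {1}(numEsg w1) invfM.
by set s := (Num.sqrt _)^-1; field; rewrite normr_eq0.
Qed.

End ivaff.

Lemma sCor_self k X : 0 < sVar P k X -> sCor P k X X = sCov P k X X / sVar P k X.
Proof. by move=> V_gt0; rewrite /sCor -expr2 sqrtr_sqr gtr0_norm. Qed.

Lemma sCov_self k X : (k <= 3)%N -> sCov P k X X = sVar P k X.
Proof.
move=> k_le3; rewrite /sCov k_le3.
by congr (_ + delta k * fine 'E_P[_]); apply/funext => w; rewrite expr2.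
Qed.

Lemma measurable_ivR X : is_ivrv P X -> measurable_fun setT (ivR X).
Proof. by case=> mA mB _; exact: measurable_funB. Qed.

Lemma sCor_self_eq1 k X : (3 < k <= 5)%N -> is_ivrv P X ->
  ivR X \in Lfun P 2%:E -> 0 < sVar P k X ->
  sCor P k X X = 1 <-> P [set w | ivR X w = 0] = 1%E.
Proof.
move=> /andP[k_gt3 k_le5] ivX RX2 V_gt0.
rewrite sCor_self // -expectation_sqr_eq0; last exact: measurable_ivR.
have ER2_fin : ('E_P[fun w => (ivR X w ^+ 2)%R])%E \is a fin_num.
  rewrite expectation_fin_num // (_ : (fun w => _) = ivR X \* ivR X).
    exact: Lfun2_mul_Lfun1.
  by apply/funext => w; rewrite expr2.
have dk_neq0 : delta k != 0 :> R by rewrite delta_neq0 // (leq_trans _ k_gt3).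
rewrite -(fineK ER2_fin); move: V_gt0.
rewrite /sCov /sVar leqNgt k_gt3 addr0.
set c := fine _; set e := fine _ => V_gt0.
split=> [/divr1_eq/eqP | /(congr1 fine) /= e0].
- rewrite -subr_eq0 opprD addrA subrr add0r oppr_eq0 mulf_eq0 (negbTE dk_neq0) /=.
  by move/eqP ->.
- by rewrite e0 mulr0 addr0 in V_gt0 *; rewrite divff // gt_eqF.
Qed.

End symbolic_moments.

Theorem theorem2p3 (d : measure_display) (T : measurableType d) (R : realType)
  (P : probability T R) (X1 X2 : (T -> R) * (T -> R)) (w1 w2 : R) (k : nat) :
  is_ivrv P X1 -> is_ivrv P X2 -> (1 <= k <= 5)%N ->
  sCor_exists P k X1 X2 -> w1 != 0 ->
  [/\ (k <= 3)%N -> sCor P k X1 X1 = 1,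
      (4 <= k)%N -> (sCor P k X1 X1 = 1 <-> P [set w | ivR X1 w = 0] = 1%E),
      [|| k == 1%N, k == 4%N | k == 5%N] ->
        sCor P k X1 (ivaff w1 w2 X2) = Num.sg w1 * sCor P k X1 X2,
      (k == 2%N) || (k == 3%N) -> 0 < w1 ->
        sCor P k X1 (ivaff w1 w2 X2) = sCor P k X1 X2 &
      (k == 2%N) || (k == 3%N) -> w1 < 0 ->
        ('E_P[(fun w => (ivR X1 w * ivR X2 w)%R)] != 0)%E ->
        sCor P k X1 (ivaff w1 w2 X2) != - sCor P k X1 X2].
Proof.
move=> ivX1 _ /andP[k_ge1 k_le5] [[C1 C2 R1 R2] [V1 V2]] w1_neq0.
have cor_ivaff := sCor_ivaff P w1 w2 X1 X2 C1 C2 R1 R2 k w1_neq0.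
split.
- by move=> k_le3; rewrite sCor_self // sCov_self // divff // gt_eqF.
- by move=> k_ge4; apply: sCor_self_eq1; rewrite ?k_ge4.
- by move=> k145; rewrite cor_ivaff sCorE sCovR_eq0 // !mul0r !addr0.
- by move=> _ w1_gt0; rewrite cor_ivaff sCorE gtr0_sg // mul1r.
- move=> k23 w1_lt0 ER_neq0; rewrite cor_ivaff sCorE ltr0_sg //.
  have [k_ge2 k_le3] : (2 <= k)%N /\ (k <= 3)%N by case/orP: k23 => /eqP ->.
  have R_neq0 : sCovR P k X1 X2 != 0.
    rewrite /sCovR k_le3 mulf_neq0 ?delta_neq0 ?k_ge2 //.
    by rewrite fine_eq0 // expectation_fin_num // Lfun2_mul_Lfun1.
  have s_neq0 : Num.sqrt (sVar P k X1 * sVar P k X2) != 0.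
    by rewrite gt_eqF // sqrtr_gt0 mulr_gt0.
  move: (mulf_neq0 R_neq0 (invr_neq0 s_neq0)); apply: contra_neq => opp; lra.
Qed.
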